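(* Let $S$ be a Rauzy scheme for a recurrent infinite word $W$, and let $u$ be a bispecial factor of $W$ such that $F(l_1)\sqsubseteq u$ for some symmetric path $l_1$ of $S$. Then there is a symmetric path $l$ in $S$ with $F(l)=u$.
   Context: A factor $u$ of $W$ is right special if there are distinct letters $a\ne b$ with $ua$ and $ub$ factors of $W$, left special if there are distinct letters $a\ne b$ with $au,bu$ factors of $W$, and bispecial if it is both. An infinite word is recurrent if every factor occurs infinitely often. $u\sqsubseteq w$: $u$ is a factor of $w$; $u\sqsubseteq_k w$: $u$ occurs in $w$ at least $k$ times. A graph with words is a strongly connected finite directed graph (multiple edges and loops allowed) in which every edge $e$ carries a front word $F(e)$ and a back word $B(e)$, and every vertex either has in-degree $1$ and out-degree $>1$ (distributing vertex) or in-degree $>1$ and out-degree $1$ (collecting vertex). A path is a finite nonempty sequence of edges $v_1\dots v_n$ with each $v_{i+1}$ starting where $v_i$ ends; subpaths and $s_1\sqsubseteq_k s_2$ are defined via edge records. A path is symmetric if its first edge starts at a collecting vertex and its last edge ends at a distributing vertex. For $s=v_1\dots v_n$, $F(s)$ is the concatenation, in order, of the front words of $v_1$ and of all $v_i$ ($i\ge2$) starting at a distributing vertex; $B(s)$ is the concatenation, in order, of the back words of all $v_i$ ($i\le n-1$) ending at a collecting vertex and of $v_n$. A Rauzy scheme for $W$ is a graph with words such that: (1) it has more than one edge; (2) front words of edges leaving a common distributing vertex have pairwise distinct first letters, and back words of edges entering a common collecting vertex have pairwise distinct last letters; (3) $F(s)=B(s)$ for every symmetric path $s$; (4) for symmetric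 paths $s_1,s_2$ and $k\ge1$, $F(s_1)\sqsubseteq_k F(s_2)$ implies $s_1\sqsubseteq_k s_2$; (5) all words on edges are factors of $W$; (6) every factor of $W$ is a factor of $F(s)$ for some symmetric path $s$; (7) for every edge $e$ there is a factor $u_e$ of $W$ such that every symmetric path $s$ with $u_e\sqsubseteq F(s)$ passes through $e$. *)

From mathcomp Require Import all_boot.
Set Implicit Arguments. Unset Strict Implicit. Unset Printing Implicit Defensive.

Section Words.
Variable T : eqType.

Definition occ (u w : seq T) : nat :=
  count (fun i => take (size u) (drop i w) == u) (iota 0 (size w - size u).+1).

Definition occurs_k (u w : seq T) (k : nat) : Prop := k <= occ u w.
Definition subword (u w : seq T) : Prop := 1 <= occ u w.

(* pairwise distinct first / last letters (both words must be nonempty) *)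
Definition diff_first (x y : seq T) : bool :=
  match ohead x, ohead y with Some a, Some b => a != b | _, _ => false end.
Definition diff_last (x y : seq T) : bool := diff_first (rev x) (rev y).
End Words.

Section InfWords.
Variable A : eqType.
Implicit Type W : nat -> A.

Definition occurs_at W (u : seq A) (i : nat) : Prop :=
  u = mkseq (fun k => W (i + k)) (size u).
Definition factor W (u : seq A) : Prop := exists i, occurs_at W u i.
Definition recurrent W : Prop :=
  forall u, factor W u -> forall N, exists i, N <= i /\ occurs_at W u i.
Definition right_special W (u : seq A) : Prop :=
  exists a b : A, a != b /\ factor W (rcons u a) /\ factor W (rcons u b).
Definition left_special W (u : seq A) : Prop :=
  exists a b : A, a != b /\ factor W (a :: u) /\ factor W (b :: u).
Definition bispecial W u : Prop := right_special W u /\ left_special W u.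
End InfWords.

Record gww (A : eqType) := GWW {
  gV : finType;
  gE : finType;
  gsrc : gE -> gV;
  gtgt : gE -> gV;
  gF : gE -> seq A;
  gB : gE -> seq A }.

Section Graph.
Variables (A : eqType) (G : gww A).
Local Notation V := (gV G).
Local Notation E := (gE G).
Local Notation src := (@gsrc A G).
Local Notation tgt := (@gtgt A G).

Definition indeg (v : V) : nat := #|[pred e : E | tgt e == v]|.
Definition outdeg (v : V) : nat := #|[pred e : E | src e == v]|.
Definition distributing (v : V) : bool := (indeg v == 1) && (1 < outdeg v).
Definition collecting (v : V) : bool := (1 < indeg v) && (outdeg v == 1).

Definition adj : rel V := fun x y => [exists e : E, (src e == x) && (tgt e == y)].
Definition strongly_connected : Prop := forall v w : V, connect adj v w.

Definition is_graph_with_words : Prop :=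
  strongly_connected /\ forall v : V, distributing v || collecting v.

Definition is_path (s : seq E) : bool :=
  if s is e :: s' then path (fun e f => tgt e == src f) e s' else false.

Definition sym_path (s : seq E) : bool :=
  if s is e :: s' then
    [&& is_path s, collecting (src e) & distributing (tgt (last e s'))]
  else false.

Definition Fpath (s : seq E) : seq A :=
  if s is e :: s' then
    gF e ++ flatten [seq gF f | f <- s' & distributing (src f)]
  else [::].

Definition Bpath (s : seq E) : seq A :=
  if s is e :: s' then
    flatten [seq gB f | f <- belast e s' & collecting (tgt f)] ++ gB (last e s')
  else [::].
End Graph.

Definition is_rauzy_scheme (A : eqType) (W : nat -> A) (G : gww A) : Prop :=
  is_graph_with_words G /\
      1 < #|gE G| /\
      (* (2) *) (forall e1 e2 : gE G, e1 != e2 ->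
                   gsrc e1 = gsrc e2 -> distributing (gsrc e1) ->
                   diff_first (gF e1) (gF e2)) /\
                (forall e1 e2 : gE G, e1 != e2 ->
                   gtgt e1 = gtgt e2 -> collecting (gtgt e1) ->
                   diff_last (gB e1) (gB e2)) /\
      (* (3) *) (forall s : seq (gE G), sym_path s -> Fpath s = Bpath s) /\
      (* (4) *) (forall (s1 s2 : seq (gE G)) (k : nat), sym_path s1 -> sym_path s2 ->
                   1 <= k -> occurs_k (Fpath s1) (Fpath s2) k -> occurs_k s1 s2 k) /\
      (forall e : gE G, factor W (gF e) /\ factor W (gB e)) /\
      (* (6) *) (forall u, factor W u -> exists s : seq (gE G), sym_path s /\ subword u (Fpath s)) /\
    (forall e : gE G, exists ue, factor W ue /\
                   forall s : seq (gE G), sym_path s -> subword ue (Fpath s) -> e \in s).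

From mathcomp Require Import all_boot zify.
Set Implicit Arguments. Unset Strict Implicit. Unset Printing Implicit Defensive.

(* Write u = x ++ F(l0) ++ y.  The proof absorbs x into the path on the left
   and then y on the right, each time by strong induction on the leftover word.
   The right step (fill_right): a letter c with u c a factor gives a symmetric
   path s with F(l0) y c inside F(s).  By axiom (4), counted with the right
   multiplicity, this occurrence of F(l0) comes from an occurrence of l0 in s
   (lemma align), and F(s) splits accordingly (F_decomp).  The edges of s after
   l0, up to the next distributing vertex, add exactly one front word F(g) to
   F(l0).  Either F(g) fits inside y and we get a longer symmetric path, or
   F(g) starts with y c; this cannot happen for both right extensions a <> b
   of u, by axiom (2) at the distributing vertex where g starts.
   The left step is the right step in the reversed scheme rev_gww, where edges
   are turned around and front and back words exchanged and reversed; the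
   axioms used by the right step transfer to the reversed scheme
   (section Reversal), which yields fill_left. *)

Section Words.
Variable T : eqType.
Implicit Types u w x y : seq T.

Definition occ_pos u w : seq nat :=
  [seq i <- iota 0 (size w - size u).+1 | take (size u) (drop i w) == u].

Lemma occE u w : occ u w = size (occ_pos u w).
Proof. by rewrite size_filter. Qed.

Lemma occ_pos_uniq u w : uniq (occ_pos u w).
Proof. by rewrite filter_uniq // iota_uniq. Qed.

Lemma occ_pos_cat x u y : size x \in occ_pos u (x ++ u ++ y).
Proof.
rewrite mem_filter drop_size_cat // take_size_cat // eqxx mem_iota !size_cat.
lia.
Qed.

Lemma occ_pos_split i u w :
  i \in occ_pos u w -> w = take i w ++ u ++ drop (i + size u) w.
Proof.
rewrite mem_filter => /andP[/eqP occ_i _].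
by rewrite -{1}(cat_take_drop i w) -{1}(cat_take_drop (size u) (drop i w)) occ_i drop_drop addnC.
Qed.

Lemma subwordP u w : subword u w <-> exists x y, w = x ++ u ++ y.
Proof.
rewrite /subword occE; split.
  case: (occ_pos u w) (fun i => @occ_pos_split i u w) => [//|i I] split_i _.
  by exists (take i w), (drop (i + size u) w); apply: split_i; rewrite inE eqxx.
case=> x [y ->]; have := occ_pos_cat x u y.
by case: (occ_pos _ _).
Qed.

Lemma cat_inj_size x1 x2 y1 y2 :
  size x1 = size x2 -> x1 ++ y1 = x2 ++ y2 -> x1 = x2 /\ y1 = y2.
Proof. by move=> eq_size /eqP; rewrite eqseq_cat // => /andP[/eqP-> /eqP->]. Qed.

Lemma cat_eq_cases x1 y1 x2 y2 : x1 ++ y1 = x2 ++ y2 ->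
  (exists z, x2 = x1 ++ z /\ y1 = z ++ y2) \/
  (exists a z, x1 = x2 ++ a :: z /\ y2 = a :: z ++ y1).
Proof.
elim: x2 x1 => [|b x2 IH] [|a x1] //= eq_cat.
- by left; exists [::].
- by right; exists a, x1.
- by left; exists (b :: x2).
case: eq_cat => -> /IH [[z [-> ->]] | [c [z [-> ->]]]].
  by left; exists z.
by right; exists c, z.
Qed.

Lemma subword_prefix u v w : subword (u ++ v) w -> subword u w.
Proof. by move=> /subwordP[x [y ->]]; apply/subwordP; exists x, (v ++ y); rewrite !catA. Qed.

Lemma count_iota_rev n (a : pred nat) :
  count a (iota 0 n) = count (fun i => a (n - i.+1)) (iota 0 n).
Proof.
have idx : iota 0 n = index_iota 0 n by rewrite /index_iota subn0.
by rewrite -!sum1_count idx big_nat_rev.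
Qed.

(* Reversal maps the occurrences of u in w bijectively to those of rev u in
   rev w (position i goes to size w - size u - i). *)
Lemma occ_rev u w : occ (rev u) (rev w) = occ u w.
Proof.
rewrite /occ !size_rev count_iota_rev; apply: eq_in_count => i.
rewrite mem_iota subSS /= => lt_i.
case: (leqP (size u) (size w)) => [le_uw | lt_wu]; last first.
  by apply/eqP/eqP => /(congr1 size); rewrite size_take_min size_drop ?size_rev; lia.
rewrite drop_rev take_rev size_takel; last lia.
rewrite (inj_eq (can_inj revK)) take_drop.
by congr (drop _ (take _ _) == _); lia.
Qed.
End Words.

Lemma card_gt1_other (T : finType) (P : {pred T}) (x : T) :
  1 < #|P| -> exists2 y, y \in P & y != x.
Proof.
case/card_gt1P=> y [z [Py Pz neq_yz]].
by case: (eqVneq y x) => [eq_yx|]; [exists z; rewrite // -eq_yx eq_sym | exists y].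
Qed.

Section Paths.
Variables (A : eqType) (G : gww A).
Local Notation E := (gE G).
Local Notation src := (@gsrc A G).
Local Notation tgt := (@gtgt A G).
Implicit Types (e f : E) (s p q r : seq E).

Definition linked : rel E := fun e f => tgt e == src f.

(* v is a factor of the word of some symmetric path; by axiom (6) every
   factor of W has this property. *)
Definition sym_factor (v : seq A) : Prop :=
  exists2 s : seq E, sym_path s & subword v (Fpath s).

(* What the edges of s contribute to F of a path they continue, and to B of a
   path they start without ending it. *)
Definition Fcontrib s : seq A := flatten [seq gF f | f <- s & distributing (src f)].
Definition Bcontrib s : seq A := flatten [seq gB f | f <- s & collecting (tgt f)].

Lemma Fcontrib_cat s1 s2 : Fcontrib (s1 ++ s2) = Fcontrib s1 ++ Fcontrib s2.
Proof. by rewrite /Fcontrib filter_cat map_cat flatten_cat. Qed.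

Lemma Bcontrib_cat s1 s2 : Bcontrib (s1 ++ s2) = Bcontrib s1 ++ Bcontrib s2.
Proof. by rewrite /Bcontrib filter_cat map_cat flatten_cat. Qed.

Lemma Fpath_cons e s : Fpath (e :: s) = gF e ++ Fcontrib s.
Proof. by []. Qed.

Lemma Bpath_rcons s e : Bpath (rcons s e) = Bcontrib s ++ gB e.
Proof. by case: s => [|f s] //=; rewrite belast_rcons last_rcons. Qed.

Lemma Fpath_cat s1 s2 : s1 != [::] -> Fpath (s1 ++ s2) = Fpath s1 ++ Fcontrib s2.
Proof. by case: s1 => [|e s1] // _; rewrite cat_cons !Fpath_cons Fcontrib_cat catA. Qed.

Lemma Bpath_cat s1 s2 : s2 != [::] -> Bpath (s1 ++ s2) = Bcontrib s1 ++ Bpath s2.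
Proof.
case/lastP: s2 => [|s2 e] // _.
by rewrite -rcons_cat !Bpath_rcons Bcontrib_cat catA.
Qed.

Lemma is_path_catr p q : is_path (p ++ q) -> q != [::] -> is_path q.
Proof.
case: p => [|e p] // path_pq; case: q path_pq => [|f q] //=.
by rewrite cat_path => /andP[_ /= /andP[]].
Qed.

Lemma sym_is_path s : sym_path s -> is_path s.
Proof. by case: s => [|e s] // /and3P[]. Qed.

Lemma sym_path_last p f q : sym_path (p ++ f :: q) -> distributing (tgt (last f q)).
Proof. by case: p => [|e p] /and3P[_ _]; rewrite //= last_cat. Qed.

Lemma sym_infix p f q r : sym_path (p ++ (f :: q) ++ r) ->
  collecting (src f) -> distributing (tgt (last f q)) -> sym_path (f :: q).
Proof.
move=> sym_s coll_f dist_q; rewrite /sym_path coll_f dist_q !andbT.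
have /is_path_catr /(_ isT) /= := sym_is_path sym_s.
by rewrite cat_path => /andP[-> _].
Qed.

(* Following a path from e until the first distributing vertex: the edges
   traversed start at non-distributing vertices, so they contribute nothing
   to F. *)
Lemma reach_distributing e r : path linked e r ->
  has (fun f => distributing (tgt f)) (e :: r) ->
  exists qt r2, r = qt ++ r2 /\ distributing (tgt (last e qt)) /\ Fcontrib qt = [::].
Proof.
elim: r e => [|f r IH] e /=.
  by rewrite orbF => _ dist_e; exists [::], [::].
case/andP=> /eqP link_ef path_fr.
case: (boolP (distributing (tgt e))) => [dist_e _ | ndist_e /= has_fr].
  by exists [::], (f :: r).
have [qt [r2 [-> [dist_last Fqt]]]] := IH f path_fr has_fr.
exists (f :: qt), r2; split=> //; split=> //.
by rewrite /Fcontrib /= -link_ef (negbTE ndist_e).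
Qed.
End Paths.

Section Scheme.
Variables (A : eqType) (G : gww A).
Local Notation E := (gE G).
Local Notation src := (@gsrc A G).
Local Notation tgt := (@gtgt A G).
Local Notation linked := (@linked A G).
Local Notation sym_factor := (@sym_factor A G).
Implicit Types (e f : E) (s l p r : seq E) (x y : seq A).

Hypothesis front_distinct : forall e1 e2 : E, e1 != e2 -> src e1 = src e2 ->
  distributing (src e1) -> diff_first (gF e1) (gF e2).
Hypothesis back_distinct : forall e1 e2 : E, e1 != e2 -> tgt e1 = tgt e2 ->
  collecting (tgt e1) -> diff_last (gB e1) (gB e2).
Hypothesis sym_FB : forall s : seq E, sym_path s -> Fpath s = Bpath s.
Hypothesis occ_lift : forall (s1 s2 : seq E) (k : nat), sym_path s1 -> sym_path s2 ->
  1 <= k -> occurs_k (Fpath s1) (Fpath s2) k -> occurs_k s1 s2 k.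

(* By axiom (2), edges leaving a distributing vertex have nonempty front
   words, and edges entering a collecting vertex nonempty back words. *)
Lemma F_nonempty e : distributing (src e) -> gF e != [::].
Proof.
move=> dist_e; have /andP[_ outdeg_e] := dist_e.
have [f /eqP src_f neq_fe] := card_gt1_other e outdeg_e.
have := front_distinct (e1 := e) (e2 := f); rewrite eq_sym neq_fe.
by move=> /(_ isT (esym src_f) dist_e); rewrite /diff_first; case: (gF e).
Qed.

Lemma B_nonempty e : collecting (tgt e) -> gB e != [::].
Proof.
move=> coll_e; have /andP[indeg_e _] := coll_e.
have [f /eqP tgt_f neq_fe] := card_gt1_other e indeg_e.
have := back_distinct (e1 := e) (e2 := f); rewrite eq_sym neq_fe.
by move=> /(_ isT (esym tgt_f) coll_e); rewrite /diff_last /diff_first; case: (gB e).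
Qed.

(* The word of a symmetric path around a symmetric subpath l: by axiom (3)
   the part before l may be read off the back words. *)
Lemma F_decomp p l r : sym_path (p ++ l ++ r) -> sym_path l ->
  Fpath (p ++ l ++ r) = Bcontrib p ++ Fpath l ++ Fcontrib r.
Proof.
case: l => [//|f l] sym_s sym_l.
have sym_lr : sym_path ((f :: l) ++ r).
  apply: (@sym_infix _ _ p f (l ++ r) [::]); rewrite ?cats0 //.
    by case/and3P: sym_l.
  exact: sym_path_last sym_s.
by rewrite sym_FB // Bpath_cat // -sym_FB // Fpath_cat.
Qed.

(* Before the start of a symmetric subpath l, the back contribution strictly
   grows: the edge entering l ends at a collecting vertex. *)
Lemma Bcontrib_take_lt j p l r : j < size p -> is_path (p ++ l ++ r) -> sym_path l ->
  size (Bcontrib (take j p)) < size (Bcontrib p).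
Proof.
case/lastP: p => [//|p g]; case: l => [//|f l].
rewrite size_rcons ltnS => le_jp path_s /and3P[_ coll_f _].
have link_gf : tgt g = src f.
  by move: path_s; rewrite cat_rcons => /is_path_catr/(_ isT) /= /andP[/eqP].
have Bcontrib_g : Bcontrib [:: g] = gB g by rewrite /Bcontrib /= link_gf coll_f /= cats0.
have := B_nonempty (e := g); rewrite link_gf -size_eq0 => /(_ coll_f) nonempty_g.
rewrite -cats1 takel_cat // -{2}(cat_take_drop j p) !Bcontrib_cat Bcontrib_g !size_cat.
lia.
Qed.

Lemma Bcontrib_occ_lt s l j1 j2 : sym_path s -> sym_path l -> j1 < j2 ->
  j2 \in occ_pos l s -> size (Bcontrib (take j1 s)) < size (Bcontrib (take j2 s)).
Proof.
move=> sym_s sym_l lt_j12 occ_j2; rewrite -(take_takel s (ltnW lt_j12)).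
have le_j2 : j2 <= size s.
  move: occ_j2; rewrite mem_filter mem_iota add0n ltnS => /and3P[_ _ le_j2].
  exact: leq_trans le_j2 (leq_subr _ _).
apply: (Bcontrib_take_lt (l := l) (r := drop (j2 + size l) s)) sym_l.
  by rewrite size_takel.
by rewrite -(occ_pos_split occ_j2); exact: sym_is_path sym_s.
Qed.

(* The
   occurrences of l are mapped injectively to occurrences of F(l) (by the
   position of their back contribution); axiom (4) shows that there are no
   more occurrences of F(l) than of l, so this map is onto. *)
Lemma align s l x y : sym_path s -> sym_path l -> Fpath s = x ++ Fpath l ++ y ->
  exists p r, s = p ++ l ++ r /\ size (Bcontrib p) = size x.
Proof.
move=> sym_s sym_l eq_Fs.
pose pos j := size (Bcontrib (take j s)).
have split_j j : j \in occ_pos l s -> s = take j s ++ l ++ drop (j + size l) s.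
  exact: occ_pos_split.
have pos_occ j : j \in occ_pos l s -> pos j \in occ_pos (Fpath l) (Fpath s).
  by move=> /split_j def_s; rewrite {1}def_s F_decomp -?def_s //; apply: occ_pos_cat.
have pos_inj : {in occ_pos l s &, injective pos}.
  move=> j1 j2 occ_j1 occ_j2 eq_pos.
  case: (ltngtP j1 j2) => [lt_j12 | lt_j21 | eq_j12]; last exact: eq_j12.
    have : pos j1 < pos j2 := Bcontrib_occ_lt sym_s sym_l lt_j12 occ_j2.
    by rewrite eq_pos ltnn.
  have : pos j2 < pos j1 := Bcontrib_occ_lt sym_s sym_l lt_j21 occ_j1.
  by rewrite eq_pos ltnn.
have x_occ : size x \in occ_pos (Fpath l) (Fpath s).
  by rewrite eq_Fs; apply: occ_pos_cat.
have le_occ : size (occ_pos (Fpath l) (Fpath s)) <= size (map pos (occ_pos l s)).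
  rewrite size_map -!occE; apply: occ_lift sym_l sym_s _ _; last exact: leqnn.
  by rewrite occE; case: (occ_pos _ _) x_occ.
have pos_sub : {subset map pos (occ_pos l s) <= occ_pos (Fpath l) (Fpath s)}.
  by move=> i /mapP[j occ_j ->]; apply: pos_occ.
have pos_uniq : uniq (map pos (occ_pos l s)).
  by rewrite (map_inj_in_uniq pos_inj); apply: occ_pos_uniq.
have [_ /(_ (size x))] := uniq_min_size pos_uniq pos_sub le_occ.
rewrite x_occ => /mapP[j occ_j eq_x].
by exists (take j s), (drop (j + size l) s); split; [apply: split_j | rewrite eq_x].
Qed.

Lemma extend_right f l y c s : sym_path (f :: l) -> sym_path s -> y != [::] ->
  subword (Fpath (f :: l) ++ y ++ [:: c]) (Fpath s) ->
  (exists (m : seq E) y', sym_path m /\ Fpath (f :: l) ++ y = Fpath m ++ y' /\ size y' < size y) \/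
  (exists e z, src e = tgt (last f l) /\ gF e = y ++ c :: z).
Proof.
move=> sym_l sym_s ne_y /subwordP[X [Y eq_Fs]].
have {}eq_Fs : Fpath s = X ++ Fpath (f :: l) ++ y ++ c :: Y by rewrite eq_Fs -!catA.
have [p [r [def_s size_p]]] := align sym_s sym_l eq_Fs.
have eq_r : Fcontrib r = y ++ c :: Y.
  move: eq_Fs; rewrite def_s F_decomp -?def_s //.
  by case/(cat_inj_size size_p) => _ /(cat_inj_size erefl) [].
case: r def_s eq_r => [|g r] def_s eq_r; first by case: (y) eq_r.
have path_s : path linked f (l ++ g :: r).
  by have := sym_is_path sym_s; rewrite def_s => /is_path_catr/(_ isT).
move: path_s; rewrite cat_path /= => /and3P[_ /eqP link_g path_gr].
have dist_g : distributing (src g) by rewrite -link_g; case/and3P: sym_l.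
have sym_s' : sym_path ((p ++ f :: l) ++ g :: r) by rewrite -catA -def_s.
have has_dist : has (fun h => distributing (tgt h)) (g :: r).
  by apply/hasP; exists (last g r); [apply: mem_last | apply: sym_path_last sym_s'].
have [qt [r2 [def_r [dist_qt F_qt]]]] := reach_distributing path_gr has_dist.
have F_gqt : Fcontrib (g :: qt) = gF g.
  by rewrite -cat1s Fcontrib_cat F_qt cats0 /Fcontrib /= dist_g /= cats0.
rewrite def_r -cat_cons Fcontrib_cat F_gqt in eq_r.
case: (cat_eq_cases eq_r) => [[z [def_y _]] | [a [z [def_g [-> _]]]]]; last first.
  by right; exists g, z.
left; exists ((f :: l) ++ g :: qt), z; split; [|split].
- apply: (@sym_infix _ _ p f (l ++ g :: qt) r2); first by move: sym_s; rewrite def_s def_r /= -!catA.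
    by case/and3P: sym_l.
  by rewrite last_cat.
- by rewrite Fpath_cat // F_gqt def_y catA.
- by move: (F_nonempty dist_g); rewrite def_y size_cat -size_eq0; lia.
Qed.

Lemma fill_right v a b : a != b -> sym_factor (rcons v a) -> sym_factor (rcons v b) ->
  forall l y, sym_path l -> v = Fpath l ++ y -> exists2 m : seq E, sym_path m & Fpath m = v.
Proof.
move=> neq_ab [sa sym_sa fac_a] [sb sym_sb fac_b] l y.
have [n lt_y] := ubnP (size y); elim: n y l lt_y => // n IH y [|f l] // lt_y sym_l def_v.
case: (eqVneq y [::]) => [eq_y | ne_y].
  by exists (f :: l); rewrite // def_v eq_y cats0.
have sub c s : subword (rcons v c) (Fpath s) ->
    subword (Fpath (f :: l) ++ y ++ [:: c]) (Fpath s).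
  by rewrite -cats1 def_v -catA.
have [[m [y' [sym_m [eq_v lt_y']]]] | [ea [za [src_a F_a]]]] :=
    extend_right sym_l sym_sa ne_y (sub _ _ fac_a).
  by apply: (IH y' m _ sym_m); [apply: leq_trans lt_y' lt_y | rewrite def_v].
have [[m [y' [sym_m [eq_v lt_y']]]] | [eb [zb [src_b F_b]]]] :=
    extend_right sym_l sym_sb ne_y (sub _ _ fac_b).
  by apply: (IH y' m _ sym_m); [apply: leq_trans lt_y' lt_y | rewrite def_v].
have dist_a : distributing (src ea) by rewrite src_a; case/and3P: sym_l.
case: (eqVneq ea eb) => [eq_ab | neq_e].
  move: F_b; rewrite -eq_ab F_a => /(cat_inj_size erefl) [_ [eq_ab']].
  by rewrite eq_ab' eqxx in neq_ab.
have := front_distinct neq_e (etrans src_a (esym src_b)) dist_a.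
by rewrite F_a F_b /diff_first; case: (y) ne_y => //= y0 _; rewrite eqxx.
Qed.
End Scheme.

Lemma last_rev (T : Type) (x : T) (s : seq T) : last x (rev s) = head x s.
Proof. by case: s => //= y s; rewrite rev_cons last_rcons. Qed.

Lemma rev_flatten_filter (T U : Type) (P : pred T) (g : T -> seq U) (s : seq T) :
  rev (flatten [seq g x | x <- s & P x]) = flatten [seq rev (g x) | x <- rev s & P x].
Proof. by rewrite rev_flatten -map_comp -map_rev filter_rev. Qed.

Section Reversal.
Variables (A : eqType) (G : gww A).
Local Notation E := (gE G).
Local Notation src := (@gsrc A G).
Local Notation tgt := (@gtgt A G).
Implicit Types (e f : E) (s l : seq E).

Definition rev_gww : gww A :=
  @GWW A (gV G) E tgt src (fun e => rev (gB e)) (fun e => rev (gF e)).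
Local Notation G' := rev_gww.

Lemma distributing_rev (v : gV G) : @distributing A G' v = collecting v.
Proof. by rewrite /distributing /collecting andbC. Qed.

Lemma collecting_rev (v : gV G) : @collecting A G' v = distributing v.
Proof. by rewrite /distributing /collecting andbC. Qed.

Lemma Fcontrib_rev s : @Fcontrib A G' (rev s) = rev (Bcontrib s).
Proof.
rewrite /Bcontrib rev_flatten_filter /Fcontrib.
by congr (flatten (map _ _)); apply: eq_filter => f; apply: distributing_rev.
Qed.

Lemma Bcontrib_rev s : @Bcontrib A G' (rev s) = rev (Fcontrib s).
Proof.
rewrite /Fcontrib rev_flatten_filter /Bcontrib.
by congr (flatten (map _ _)); apply: eq_filter => f; apply: collecting_rev.
Qed.

Lemma Fpath_rev s : @Fpath A G' (rev s) = rev (Bpath s).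
Proof.
case/lastP: s => [//|s e].
by rewrite rev_rcons Fpath_cons Fcontrib_rev Bpath_rcons rev_cat.
Qed.

Lemma Bpath_rev s : @Bpath A G' (rev s) = rev (Fpath s).
Proof. by case: s => [//|e s]; rewrite rev_cons Bpath_rcons Bcontrib_rev rev_cat. Qed.

Lemma sym_path_rev s : @sym_path A G' (rev s) = sym_path s.
Proof.
case: s => [//|e p]; rewrite {1}lastI rev_rcons /sym_path /is_path rev_path last_rev.
have -> : head (last e p) (belast e p) = e by case: p.
rewrite collecting_rev distributing_rev [LHS]andbC [in LHS]andbC (andbC (distributing _)).
by congr andb; apply: eq_path => x y; apply: eq_sym.
Qed.

Hypothesis front_distinct : forall e1 e2 : E, e1 != e2 -> src e1 = src e2 ->
  distributing (src e1) -> diff_first (gF e1) (gF e2).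
Hypothesis back_distinct : forall e1 e2 : E, e1 != e2 -> tgt e1 = tgt e2 ->
  collecting (tgt e1) -> diff_last (gB e1) (gB e2).
Hypothesis sym_FB : forall s : seq E, sym_path s -> Fpath s = Bpath s.
Hypothesis occ_lift : forall (s1 s2 : seq E) (k : nat), sym_path s1 -> sym_path s2 ->
  1 <= k -> occurs_k (Fpath s1) (Fpath s2) k -> occurs_k s1 s2 k.

Lemma sym_Fpath_rev s : sym_path s -> @Fpath A G' (rev s) = rev (Fpath s).
Proof. by move=> sym_s; rewrite Fpath_rev sym_FB. Qed.

Lemma rev_front_distinct (e1 e2 : gE G') : e1 != e2 -> gsrc e1 = gsrc e2 ->
  distributing (gsrc e1) -> diff_first (gF e1) (gF e2).
Proof. by rewrite distributing_rev; apply: back_distinct. Qed.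

Lemma rev_back_distinct (e1 e2 : gE G') : e1 != e2 -> gtgt e1 = gtgt e2 ->
  collecting (gtgt e1) -> diff_last (gB e1) (gB e2).
Proof.
by rewrite collecting_rev /diff_last /= !revK; apply: front_distinct.
Qed.

Lemma rev_sym_FB (s : seq (gE G')) : sym_path s -> Fpath s = Bpath s.
Proof.
by rewrite -(revK s) sym_path_rev Bpath_rev => /sym_Fpath_rev.
Qed.

Lemma rev_occ_lift (s1 s2 : seq (gE G')) (k : nat) : sym_path s1 -> sym_path s2 ->
  1 <= k -> occurs_k (Fpath s1) (Fpath s2) k -> occurs_k s1 s2 k.
Proof.
rewrite -(revK s1) -(revK s2); move: (rev s1) (rev s2) => t1 t2.
rewrite !sym_path_rev => sym1 sym2 k_gt0.
rewrite /occurs_k !sym_Fpath_rev // !occ_rev; exact: occ_lift.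
Qed.

Lemma sym_factor_rev u : sym_factor G u -> sym_factor G' (rev u).
Proof.
case=> s sym_s sub_s; exists (rev s); first by rewrite sym_path_rev.
by rewrite sym_Fpath_rev // /subword occ_rev.
Qed.

Lemma fill_left v a b : a != b -> sym_factor G (a :: v) -> sym_factor G (b :: v) ->
  forall l x, sym_path l -> v = x ++ Fpath l -> exists2 m : seq E, sym_path m & Fpath m = v.
Proof.
move=> neq_ab /sym_factor_rev + /sym_factor_rev + l x sym_l def_v.
rewrite !rev_cons => fac_a fac_b.
have sym_l' : @sym_path A G' (rev l) by rewrite sym_path_rev.
have def_v' : rev v = @Fpath A G' (rev l) ++ rev x by rewrite def_v rev_cat sym_Fpath_rev.
have [m sym_m F_m] := fill_right rev_front_distinct rev_back_distinct rev_sym_FB rev_occ_lift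
  neq_ab fac_a fac_b sym_l' def_v'.
have sym_m' : @sym_path A G (rev m) by rewrite -sym_path_rev revK.
exists (rev m) => //.
by rewrite -[LHS]revK -sym_Fpath_rev // revK F_m revK.
Qed.
End Reversal.

Theorem mainTheorem7 (A : eqType) (W : nat -> A) (G : gww A) :
  is_rauzy_scheme W G -> recurrent W ->
  forall u : seq A, bispecial W u ->
  (exists l1 : seq (gE G), sym_path l1 /\ subword (Fpath l1) u) ->
  exists l : seq (gE G), sym_path l /\ Fpath l = u.
Proof.
move=> [_ [_ [front [back [FB [occ_lift [_ [factor_sym _]]]]]]]] _ u.
move=> [[a [b [neq_ab [fac_a fac_b]]]] [a' [b' [neq_ab' [fac_a' fac_b']]]]].
move=> [l0 [sym_l0 /subwordP[x [y def_u]]]].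
have sym_fac w : factor W w -> sym_factor G w.
  by case/factor_sym=> s [sym_s sub_s]; exists s.
have left_fac c : factor W (c :: u) -> sym_factor G (c :: x ++ Fpath l0).
  case/sym_fac=> s sym_s sub_s; exists s => //.
  by apply: (@subword_prefix _ _ y); rewrite /= -catA -def_u.
have [m sym_m F_m] := fill_left front back FB occ_lift neq_ab'
  (left_fac _ fac_a') (left_fac _ fac_b') sym_l0 erefl.
have def_u' : u = Fpath m ++ y by rewrite F_m def_u catA.
have [l sym_l F_l] := fill_right front back FB occ_lift neq_ab
  (sym_fac _ fac_a) (sym_fac _ fac_b) sym_m def_u'.
by exists l.
Qed.
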